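(* Let $n$ be a positive integer and $k$ an integer with $0\le k\le n$. Then $$e_k\left(\left\{\sin^2\left(\tfrac{(2j-1)\pi}{4n+2}\right) : j=1,\dots,n\right\}\right) = \frac{4^{-k}(2n-k)!}{(2n-2k)!\,k!}.$$
   Context: $e_k(\alpha_1,\dots,\alpha_n)$ denotes the degree-$k$ elementary symmetric function of $\alpha_1,\dots,\alpha_n$ (with $e_0=1$). *)

From Stdlib Require Import Reals List Arith.
Open Scope R_scope.

Fixpoint esym (k : nat) (l : list R) : R :=
  match k with
  | O => 1
  | S k' => match l with
            | nil => 0
            | x :: l' => esym (S k') l' + x * esym k' l'
            end
  end.

Definition sin2_list (n : nat) : list R :=
  map (fun j : nat => (sin ((2 * INR j - 1) * PI / (4 * INR n + 2))) ^ 2)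
      (seq 1 n).

From Pilot Require Import Defs.
From Stdlib Require Import Reals List Arith Lra Lia.
From mathcomp Require all_boot all_algebra Rstruct zify ring.

(* Write theta_j = (2j-1)pi/(4n+2) and phi_j = pi/2 - theta_j. The identity
   sin((m+1)phi) = sin phi * U_m(cos phi) for the Chebyshev polynomials U_m of
   the second kind, together with (2n+1)phi_j = (n+1-j)pi, makes
   cos phi_j = sin theta_j (j = 1..n) zeros of U_(2n). Since U_(2n) is even,
   U_(2n)(x) = 4^n q(x^2) with q monic of degree n, and the coefficient of
   y^(n-k) in q is (-1)^k C(2n-k,k)/4^k. The n numbers sin^2 theta_j are
   distinct roots of q, so q is their product polynomial, and Vieta's formulas
   give e_k = C(2n-k,k)/4^k = (2n-k)!/(4^k (2n-2k)! k!). *)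

(* MathComp is imported only inside this module, so that the final statement
   is elaborated with the Stdlib notations of the statement. *)
Module SinSquaresEsym.
Import all_boot all_algebra Rstruct zify.
Import GRing.Theory Num.Theory.

Section ChebyshevU.
Import ring.
Context {R : comPzRingType}.
Local Open Scope ring_scope.

Definition chebU_term (m k : nat) (x : R) : R :=
  (-1) ^+ k * 'C(m - k, k)%:R * (2 * x) ^+ (m - 2 * k).

Definition chebU (m : nat) (x : R) : R := \sum_(k < m.+1) chebU_term m k x.

Lemma chebU_term_eq0 m k x : (m < 2 * k)%N -> chebU_term m k x = 0.
Proof. by move=> lt_m_2k; rewrite /chebU_term bin_small ?mulr0 ?mul0r //; lia. Qed.

Lemma chebU_term0S m x : chebU_term m.+1 0 x = 2 * x * chebU_term m 0 x.
Proof. by rewrite /chebU_term muln0 !subn0 !bin0 exprS; ring. Qed.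

Lemma chebU_termSS m k x :
  chebU_term m.+2 k.+1 x = 2 * x * chebU_term m.+1 k.+1 x - chebU_term m k x.
Proof.
rewrite /chebU_term.
have [le_km|lt_mk] := leqP k m; last first.
  by rewrite !bin_small; [rewrite !mulr0 !mul0r mulr0 subrr | lia..].
have -> : (m.+2 - k.+1 = (m - k).+1)%N by lia.
have -> : (m.+2 - 2 * k.+1 = m - 2 * k)%N by lia.
have -> : (m.+1 - k.+1 = m - k)%N by lia.
rewrite binS natrD exprS.
have [le_k1_mk|lt_mk_k1] := leqP k.+1 (m - k); last first.
  by rewrite (bin_small lt_mk_k1); ring.
have -> : (m - 2 * k = (m.+1 - 2 * k.+1).+1)%N by lia.
by rewrite exprS; ring.
Qed.

Lemma chebU0 x : chebU 0 x = 1.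
Proof. by rewrite /chebU big_ord1 /chebU_term mul1r mulr1. Qed.

Lemma chebU1 x : chebU 1 x = 2 * x.
Proof.
rewrite /chebU big_ord_recr big_ord1 /chebU_term /=.
by rewrite subn0 subnn bin0 bin0n mulr0 mul0r addr0 expr0 !mul1r expr1.
Qed.

Lemma chebUSS m x : chebU m.+2 x = 2 * x * chebU m.+1 x - chebU m x.
Proof.
rewrite /chebU big_ord_recl chebU_term0S.
under eq_bigr => k _ do rewrite chebU_termSS.
rewrite big_split /= sumrN -mulr_sumr.
rewrite [\sum_(k < m.+2) chebU_term m k x]big_ord_recr /=.
rewrite [\sum_(k < m.+2) chebU_term m.+1 k.+1 x]big_ord_recr /=.
rewrite (chebU_term_eq0 m.+1 m.+2) ?(chebU_term_eq0 m m.+1) ?addr0; try lia.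
by rewrite [in RHS]big_ord_recl mulrDr; ring.
Qed.
End ChebyshevU.

Section SinMultiple.
Import ring.
Local Open Scope ring_scope.
(* Otherwise the arguments of [sin] and [cos] would be read in R_scope. *)
Local Bind Scope ring_scope with R.

Lemma sinD_add_sinB (a b : R) : sin (a + b) + sin (a - b) = 2 * sin a * cos b.
Proof. by rewrite !sinD sin_neg cos_neg RoppE; ring. Qed.

Lemma sin_mulS_chebU m phi : sin (m.+1%:R * phi) = sin phi * chebU m (cos phi).
Proof.
suff : (sin (m.+1%:R * phi) = sin phi * chebU m (cos phi)) /\
       (sin (m.+2%:R * phi) = sin phi * chebU m.+1 (cos phi)) by case.
elim: m => [|m [IHm IHmS]].
  rewrite chebU0 chebU1 mulr1 !mulr_natl mulr1n mulr2n sinD; split=> //; ring.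
split=> //; rewrite chebUSS.
have := sinD_add_sinB (m.+2%:R * phi) phi.
have -> : m.+2%:R * phi + phi = m.+3%:R * phi by rewrite -[m.+3]addn1 natrD; ring.
have -> : m.+2%:R * phi - phi = m.+1%:R * phi by rewrite -[m.+2]addn1 natrD; ring.
rewrite IHm IHmS => sum_eq.
by apply: (addIr (sin phi * chebU m (cos phi))); rewrite sum_eq; ring.
Qed.
End SinMultiple.

Section EvenChebyshevU.
Import ring.
Context {R : numFieldType}.
Local Open Scope ring_scope.

Definition chebU_even_coef (n k : nat) : R :=
  (-1) ^+ k * 'C(2 * n - k, k)%:R / 4 ^+ k.

Definition chebU_even_poly (n : nat) : {poly R} :=
  \poly_(i < n.+1) chebU_even_coef n (n - i).

Lemma coef_chebU_even_poly n k :
  (k <= n)%N -> (chebU_even_poly n)`_(n - k) = chebU_even_coef n k.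
Proof. by move=> le_kn; rewrite coef_poly ifT ?subKn //; lia. Qed.

Lemma chebU_even_coef0 n : chebU_even_coef n 0 = 1.
Proof. by rewrite /chebU_even_coef !expr0 subn0 bin0 mul1r divr1. Qed.

Lemma size_chebU_even_poly n : size (chebU_even_poly n) = n.+1.
Proof. by rewrite size_poly_eq // subnn chebU_even_coef0 oner_neq0. Qed.

Lemma lead_coef_chebU_even_poly n : lead_coef (chebU_even_poly n) = 1.
Proof.
rewrite lead_coefE size_chebU_even_poly -[n in _`_n]subn0.
by rewrite coef_chebU_even_poly ?chebU_even_coef0.
Qed.

Lemma chebU_term_even n k x : (k <= n)%N ->
  chebU_term (2 * n) k x = 4 ^+ n * chebU_even_coef n k * (x ^+ 2) ^+ (n - k).
Proof.
move=> le_kn; rewrite /chebU_term /chebU_even_coef.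
have -> : (2 * n - 2 * k = 2 * (n - k))%N by lia.
have -> : (4 : R) ^+ n = 4 ^+ k * 4 ^+ (n - k) by rewrite -exprD subnKC.
have four_k_neq0 : (4 : R) ^+ k != 0 by rewrite expf_neq0 // pnatr_eq0.
rewrite exprM.
have -> : (2 * x) ^+ 2 = 4 * x ^+ 2 by rewrite exprMn -natrX.
by rewrite exprMn; field.
Qed.

Lemma horner_chebU_even_poly n x :
  4 ^+ n * (chebU_even_poly n).[x ^+ 2] = chebU (2 * n) x.
Proof.
rewrite horner_poly mulr_sumr (reindex_inj rev_ord_inj) /=.
pose G k := 4 ^+ n * chebU_even_coef n k * (x ^+ 2) ^+ (n - k).
rewrite (eq_bigr (fun i : 'I_n.+1 => G i)) => [|i _]; last first.
  by rewrite /G subSS subKn ?mulrA // -ltnS.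
rewrite /chebU (big_ord_widen (2 * n).+1 G) ?big_mkcond; last by lia.
apply: eq_bigr => i _; case: ifP => [lt_in|le_ni].
  by rewrite chebU_term_even.
by rewrite chebU_term_eq0 //; lia.
Qed.
End EvenChebyshevU.

(* Below, a bare [esym] would be ssrfun's symmetry of equality. *)
Section Vieta.
Import ring.
Local Open Scope ring_scope.

Lemma esym_gt_size (l : seq R) k : (size l < k)%N -> Defs.esym k l = 0.
Proof.
elim: l k => [|x l IHl] [|k] //= lt_lk.
by rewrite IHl ?(ltnW lt_lk) // IHl // RmultE RplusE mulr0 addr0.
Qed.

Lemma coef_prod_XsubC_esym (l : seq R) k : (k <= size l)%N ->
  (\prod_(x <- l) ('X - x%:P))`_(size l - k) = (-1) ^+ k * Defs.esym k l.
Proof.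
elim: l k => [|x l IHl] k /=.
  by rewrite leqn0 => /eqP ->; rewrite big_nil coefC expr0 mul1r.
rewrite big_cons mulrBl coefB coefXM coefCM.
case: k => [_|k]; rewrite ?subn0 /= ?RplusE ?RmultE.
  have top_coef0 : (\prod_(y <- l) ('X - y%:P))`_(size l).+1 = 0.
    by apply: nth_default; rewrite size_prod_XsubC.
  have := IHl 0%N (leq0n _); rewrite subn0 => ->.
  by rewrite top_coef0 mulr0 subr0 expr0 !mul1r; case: (l).
rewrite ltnS subSS; case: (ltngtP k (size l)) => [lt_kl _ | // | -> _].
- rewrite ifN; last by rewrite subn_eq0 -ltnNge.
  by rewrite -subnS IHl // (IHl k (ltnW lt_kl)) exprS; ring.
- rewrite subnn /=; have := IHl (size l) (leqnn _); rewrite subnn => ->.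
  by rewrite (esym_gt_size _ _ (ltnSn _)) exprS; ring.
Qed.
End Vieta.

Definition sin2_angle (n j : nat) : R := (2 * INR j - 1) * PI / (4 * INR n + 2).

Lemma sin2_angle_bounds n j : (0 < j <= n)%N -> 0 < sin2_angle n j < PI / 2.
Proof.
case/andP=> /leP/le_INR/= j_ge1 /leP/le_INR le_jn.
have PI_gt0 := PI_RGT_0.
have den_gt0 : 0 < 4 * INR n + 2 by lra.
rewrite /sin2_angle; split.
  by apply: Rdiv_lt_0_compat => //; apply: Rmult_lt_0_compat; lra.
apply: (Rmult_lt_reg_r (4 * INR n + 2)) => //.
rewrite /Rdiv Rmult_assoc Rinv_l; [nra | lra].
Qed.

Lemma sin2_angle_inj n : injective (sin2_angle n).
Proof.
move=> j1 j2; rewrite /sin2_angle => eq_angle.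
have PI_gt0 := PI_RGT_0.
have den_gt0 : 0 < 4 * INR n + 2 by have := pos_INR n; lra.
apply: INR_eq; apply: (Rmult_eq_reg_r (2 * PI)); last by lra.
by apply: (Rmult_eq_reg_r (/ (4 * INR n + 2))); [lra | apply: Rinv_neq_0_compat; lra].
Qed.

Lemma sin_odd_mul_complement n j :
  sin (INR (2 * n).+1 * (PI / 2 - sin2_angle n j)) = 0.
Proof.
apply: sin_eq_0_1; exists (Z.sub (Z.of_nat n.+1) (Z.of_nat j)).
rewrite minus_IZR -!INR_IZR_INZ /sin2_angle !S_INR mult_INR /=.
by field; have := pos_INR n; lra.
Qed.

Lemma sin2_angle_sqr_inj n j1 j2 : (0 < j1 <= n)%N -> (0 < j2 <= n)%N ->
  sin (sin2_angle n j1) ^ 2 = sin (sin2_angle n j2) ^ 2 -> j1 = j2.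
Proof.
move=> /sin2_angle_bounds [gt0_1 lt_1] /sin2_angle_bounds [gt0_2 lt_2] eq_sqr.
have PI_gt0 := PI_RGT_0.
have sin_gt0_1 : 0 < sin (sin2_angle n j1) by apply: sin_gt_0; lra.
have sin_gt0_2 : 0 < sin (sin2_angle n j2) by apply: sin_gt_0; lra.
apply: (sin2_angle_inj n); apply: sin_inj; [lra | lra | nra].
Qed.

Lemma chebU_sin2_angle n j :
  (0 < j <= n)%N -> chebU (2 * n) (sin (sin2_angle n j)) = 0.
Proof.
move=> /sin2_angle_bounds [gt0 lt_half]; have PI_gt0 := PI_RGT_0.
have sin_gt0 : 0 < sin (PI / 2 - sin2_angle n j) by apply: sin_gt_0; lra.
have := sin_mulS_chebU (2 * n) (PI / 2 - sin2_angle n j).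
rewrite -RmultE -INRE sin_odd_mul_complement cos_shift => /esym/eqP.
rewrite mulf_eq0 => /orP[/eqP sin0 | /eqP //].
by move: sin_gt0; rewrite sin0 => /Rlt_irrefl.
Qed.

Section SinSquaresAreRoots.
Local Open Scope ring_scope.

Lemma sin2_list_angles n :
  sin2_list n = [seq sin (sin2_angle n j) ^+ 2 | j <- iota 1 n].
Proof.
have map_seq_iota (f : nat -> R) a m : List.map f (List.seq a m) = map f (iota a m).
  by elim: m a => //= m IHm a; rewrite IHm.
by rewrite /sin2_list map_seq_iota; apply: eq_map => j; rewrite RpowE.
Qed.

Lemma size_sin2_list n : size (sin2_list n) = n.
Proof. by rewrite sin2_list_angles size_map size_iota. Qed.

Lemma uniq_sin2_list n : uniq (sin2_list n).
Proof.
rewrite sin2_list_angles map_inj_in_uniq ?iota_uniq // => j1 j2.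
rewrite !mem_iota !add1n !ltnS -!RpowE; exact: sin2_angle_sqr_inj.
Qed.

Lemma root_chebU_even_poly_sin2 n j :
  (0 < j <= n)%N -> root (chebU_even_poly n) (sin (sin2_angle n j) ^+ 2).
Proof.
move=> /chebU_sin2_angle; rewrite -horner_chebU_even_poly => /eqP.
by rewrite mulf_eq0 expf_eq0 pnatr_eq0 andbF.
Qed.

Lemma chebU_even_poly_prod n :
  chebU_even_poly n = \prod_(z <- sin2_list n) ('X - z%:P).
Proof.
rewrite [LHS](all_roots_prod_XsubC (rs := sin2_list n)).
- by rewrite lead_coef_chebU_even_poly scale1r.
- by rewrite size_chebU_even_poly size_sin2_list.
- rewrite sin2_list_angles; apply/allP => _ /mapP[j j_in ->].
  by apply: root_chebU_even_poly_sin2; rewrite mem_iota add1n ltnS in j_in.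
- by rewrite uniq_rootsE uniq_sin2_list.
Qed.

Lemma esym_sin2_list n k :
  (k <= n)%N -> Defs.esym k (sin2_list n) = 'C(2 * n - k, k)%:R / 4 ^+ k.
Proof.
move=> le_kn; have := coef_prod_XsubC_esym (sin2_list n) k.
rewrite size_sin2_list -chebU_even_poly_prod coef_chebU_even_poly // => /(_ le_kn).
by rewrite /chebU_even_coef -mulrA => /(mulfI (negbT (signr_eq0 _ _))) <-.
Qed.
End SinSquaresAreRoots.

Lemma natr_bin_factd {F : numFieldType} m k : (k <= m)%N ->
  ('C(m, k)%:R = m`!%:R / (k`!%:R * (m - k)`!%:R) :> F)%R.
Proof.
move=> le_km; rewrite -(bin_fact le_km) !natrM mulfK //.
by rewrite mulf_neq0 // pnatr_eq0 -lt0n fact_gt0.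
Qed.

Lemma esym_sin2_list_factorials n k : (k <= n)%coq_nat ->
  Defs.esym k (sin2_list n) =
  / 4 ^ k * INR (fact (2 * n - k)) / (INR (fact (2 * n - 2 * k)) * INR (fact k)).
Proof.
move=> /leP le_kn; rewrite esym_sin2_list // natr_bin_factd; last by lia.
have -> : (2 * n - 2 * k = 2 * n - k - k)%N by lia.
rewrite !INRE !factE RpowE RinvE RdivE !RmultE IZRposE INRE -[nat_of_pos 4]/4%N.
by rewrite mulrC mulrA [(k`!%:R * _)%R]mulrC.
Qed.
End SinSquaresEsym.

Theorem mainTheorem10 (n k : nat) (hn : (1 <= n)%nat) (hk : (k <= n)%nat) :
  esym k (sin2_list n) =
  / 4 ^ k * INR (fact (2 * n - k)) / (INR (fact (2 * n - 2 * k)) * INR (fact k)).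
Proof.
exact (SinSquaresEsym.esym_sin2_list_factorials n k hk).
Qed.
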